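(* Let $(M,\circ,\mathrm{OR})$ be a free $\mathbb{D}$-module of rank 3 with scalar product and orientation, and let $z_1,z_2,z_3\in M\setminus\epsilon M$. Then $z_1\times z_2\circ z_3=0$ if and only if either the three axes are parallel, or the three axes intersect orthogonally a common line of $E$.
   Context: $\mathbb{D}=\{a+\epsilon b: a,b\in\mathbb{R}\}$, $\epsilon^2=0$. Scalar product: symmetric $\mathbb{D}$-bilinear $\circ:M\times M\to\mathbb{D}$ with $\mathfrak{Re}(x\circ x)\ge0$, equality iff $x\in\epsilon M$; orientation: one of the two classes of ordered bases under $\{b'_j=A_{jk}b_k\}\sim\{b_k\}$ iff $\det\mathfrak{Re}(A)>0$. Cross product $x\times y=x^iy^j\epsilon_{ijk}m_k$ in any positive orthonormal basis $\{m_i\}$; $z_1\times z_2\circ z_3$ means $(z_1\times z_2)\circ z_3$. $V=M/\epsilon M$, $\pi$ the quotient map. $E$ is the set of real 3-dimensional subspaces $P\subset M$ with $\mathfrak{Du}(x\circ y)=0$ for $x,y\in P$ and $P\cap\epsilon M=\{0\}$, a Euclidean affine space over $V$ (with $B-A:=d^ke_k$ where $e^B_i=e^A_i+\epsilon\,\epsilon_{ijk}d^ke^A_j$, $\{e_i\}$ positive orthonormal in $V$, $e^P_i\in P$ its lift). Each $z\in M\setminus\epsilon M$ is uniquely $z=(a+\epsilon b)u$ with $a>0$, $b\in\mathbb{R}$, $u\circ u=1$; its axis is the line $\{P\in E: u\in P\}$, with direction $\pi(u)$. *)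

From HB Require Import structures.
From mathcomp Require Import all_boot all_order all_algebra.
From mathcomp Require Import ring.
From mathcomp Require Import reals.
Set Implicit Arguments. Unset Strict Implicit. Unset Printing Implicit Defensive.
Import Order.TTheory GRing.Theory Num.Theory.
Local Open Scope ring_scope.

Section DualRing.
Variable R : comNzRingType.

Record dual := Dual { dre : R; ddu : R }.

Definition dual_to (x : dual) : R * R := (dre x, ddu x).
Definition dual_of (p : R * R) : dual := Dual p.1 p.2.
Lemma dual_toK : cancel dual_to dual_of. Proof. by case. Qed.

HB.instance Definition _ := Equality.copy dual (can_type dual_toK).
HB.instance Definition _ := Choice.copy dual (can_type dual_toK).

Definition dadd x y := Dual (dre x + dre y) (ddu x + ddu y).
Definition dopp x := Dual (- dre x) (- ddu x).
Definition dzero := Dual 0 0.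
Definition dmul x y := Dual (dre x * dre y) (dre x * ddu y + ddu x * dre y).
Definition done := Dual 1 0.

Lemma daddA : associative dadd.
Proof. by case=> ? ?; case=> ? ?; case=> ? ?; rewrite /dadd /= !addrA. Qed.
Lemma daddC : commutative dadd.
Proof. by case=> ? ?; case=> ? ?; rewrite /dadd /= [X in Dual X _]addrC [X in Dual _ X]addrC. Qed.
Lemma dadd0 : left_id dzero dadd.
Proof. by case=> ? ?; rewrite /dadd /= !add0r. Qed.
Lemma daddN : left_inverse dzero dopp dadd.
Proof. by case=> ? ?; rewrite /dadd /= !addNr. Qed.

HB.instance Definition _ := GRing.isZmodule.Build dual daddA daddC dadd0 daddN.

Lemma dmulA : associative dmul.
Proof. by case=> ? ?; case=> ? ?; case=> ? ?; rewrite /dmul /=; congr Dual; ring. Qed.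
Lemma dmulC : commutative dmul.
Proof. by case=> ? ?; case=> ? ?; rewrite /dmul /=; congr Dual; ring. Qed.
Lemma dmul1 : left_id done dmul.
Proof. by case=> ? ?; rewrite /dmul /=; congr Dual; ring. Qed.
Lemma dmulD : left_distributive dmul dadd.
Proof. by case=> ? ?; case=> ? ?; case=> ? ?; rewrite /dmul /= /dadd /=; congr Dual; ring. Qed.
Lemma done_neq0 : done != 0.
Proof. by apply/negP=> /eqP [] /eqP; rewrite oner_eq0. Qed.

HB.instance Definition _ :=
  GRing.Zmodule_isComNzRing.Build dual dmulA dmulC dmul1 dmulD done_neq0.

End DualRing.

Arguments Dual {R}.

Section Geometry.
Variable R : realType.

Notation D := (dual R).
Definition M := 'rV[D]_3.
(* V = M / eps M, realised as R^3 via the quotient map pi (x + eps y |-> x). *)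
Definition V := 'rV[R]_3.

Definition eps : D := Dual 0 1.
Definition rD (r : R) : D := Dual r 0.

Definition epsM (x : M) : Prop := exists y : M, x = eps *: y.
Definition pi (x : M) : V := map_mx (@dre R) x.

Definition scalar_product (sp : M -> M -> D) : Prop :=
  [/\ forall x y, sp x y = sp y x,
      forall (a : D) x y z, sp (a *: x + y) z = a * sp x z + sp y z,
      forall x, 0 <= dre (sp x x)
    & forall x, dre (sp x x) = 0 <-> epsM x].

Definition is_basis (b : 'I_3 -> M) : Prop :=
  forall x : M, exists c : 'I_3 -> D,
    x = \sum_(i < 3) c i *: b i /\
    forall c' : 'I_3 -> D, x = \sum_(i < 3) c' i *: b i -> forall i, c' i = c i.

Definition same_orientation (b b' : 'I_3 -> M) : Prop :=
  exists A : 'M[D]_3,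
    (forall j, b' j = \sum_(k < 3) A j k *: b k) /\
    0 < \det (map_mx (@dre R) A).

(* orientation OR = class of the basis b0; m is a positive orthonormal basis *)
Definition pos_orthonormal (sp : M -> M -> D) (b0 m : 'I_3 -> M) : Prop :=
  [/\ is_basis m, same_orientation b0 m
    & forall i j, sp (m i) (m j) = if i == j then 1 else 0].

Definition levi (i j k : 'I_3) : D :=
  match nat_of_ord i, nat_of_ord j, nat_of_ord k with
  | 0%N, 1%N, 2%N | 1%N, 2%N, 0%N | 2%N, 0%N, 1%N => 1
  | 0%N, 2%N, 1%N | 2%N, 1%N, 0%N | 1%N, 0%N, 2%N => -1
  | _, _, _ => 0
  end.

(* cross product in the positive orthonormal basis m; the coordinates of
   x in the orthonormal basis m are x^i = x o m_i *)
Definition cross (sp : M -> M -> D) (m : 'I_3 -> M) (x y : M) : M :=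
  \sum_(i < 3) \sum_(j < 3) \sum_(k < 3)
     (sp x (m i) * sp y (m j) * levi i j k) *: m k.

Definition real3_subspace (P : M -> Prop) : Prop :=
  exists p : 'I_3 -> M,
    (forall r : 'I_3 -> R, \sum_(i < 3) rD (r i) *: p i = 0 -> forall i, r i = 0) /\
    (forall x, P x <-> exists r : 'I_3 -> R, x = \sum_(i < 3) rD (r i) *: p i).

Definition inE (sp : M -> M -> D) (P : M -> Prop) : Prop :=
  [/\ real3_subspace P,
      forall x y, P x -> P y -> ddu (sp x y) = 0
    & forall x, P x -> epsM x -> x = 0].

(* B - A = v in V, computed with the positive orthonormal basis
   e_i = pi (m_i) of V and the lifts e^P_i \in P of e_i:
   v = d^k e_k  and  e^B_i = e^A_i + eps eps_ijk d^k e^A_j *)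
Definition diffE (m : 'I_3 -> M) (A B : M -> Prop) (v : V) : Prop :=
  exists d : 'I_3 -> R,
    v = \sum_(k < 3) d k *: pi (m k) /\
    exists eA eB : 'I_3 -> M,
      (forall i, [/\ A (eA i), B (eB i), pi (eA i) = pi (m i) & pi (eB i) = pi (m i)]) /\
      (forall i, eB i = eA i + eps *: \sum_(j < 3) \sum_(k < 3)
                                        (rD (d k) * levi i j k) *: eA j).

Definition liftV (v : V) : M := map_mx rD v.
Definition vdot (sp : M -> M -> D) (v w : V) : R := dre (sp (liftV v) (liftV w)).

Definition line_dir (sp : M -> M -> D) (m : 'I_3 -> M)
    (L : (M -> Prop) -> Prop) (v : V) : Prop :=
  v != 0 /\ exists A, inE sp A /\ L A /\
    forall B, L B <-> (inE sp B /\ exists t : R, diffE m A B (t *: v)).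

Definition is_line sp m (L : (M -> Prop) -> Prop) : Prop :=
  exists v, line_dir sp m L v.

Definition axis (sp : M -> M -> D) (z : M) : (M -> Prop) -> Prop :=
  fun P => inE sp P /\
    exists (a b : R) (u : M), [/\ 0 < a, sp u u = 1, z = Dual a b *: u & P u].

Definition parallel3 sp m (L1 L2 L3 : (M -> Prop) -> Prop) : Prop :=
  exists v, [/\ line_dir sp m L1 v, line_dir sp m L2 v & line_dir sp m L3 v].

Definition meets_orthogonally sp m (L1 L : (M -> Prop) -> Prop) : Prop :=
  (exists P, L1 P /\ L P) /\
  exists v w, [/\ line_dir sp m L1 v, line_dir sp m L w & vdot sp v w = 0].

End Geometry.

(* In an orthonormal basis the coordinates of [x : M] are [a + eps b] with
   [a, b] in R^3.  Every point of [E] is the set of the [x] with [b = p × a] for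
   a unique position [p] (isotropy makes [a ↦ b] skew-adjoint, hence a cross
   product), and differences of points are differences of positions, so the
   lines of [E] are the affine lines of positions.  For [z = (a + eps b) u]
   with [u] a unit, the axis of [z] becomes the Euclidean line
   [{p | p × re u = du u}], with Plücker coordinates [(re u, du u)].
   The triple product of dual vectors has real part [det (a1, a2, a3)] and dual
   part the derivative of [det] in the direction [(b1, b2, b3)].  Both vanish
   iff the three lines are parallel or have a common perpendicular: when
   [n = a1 × a2 <> 0], [det = 0] makes [n] normal to all three directions, and
   the vanishing of the dual part is exactly the compatibility condition for a
   point [q] whose line [q + R n] meets all three lines. *)

From Pilot Require Import Defs.
From HB Require Import structures.
From mathcomp Require Import all_boot all_order all_algebra.
From mathcomp Require Import reals boolp.
From mathcomp Require Import ring lra.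
Set Implicit Arguments. Unset Strict Implicit. Unset Printing Implicit Defensive.
Import Order.TTheory GRing.Theory Num.Theory.
Local Open Scope ring_scope.

(** * Vector algebra in R^3 *)

Definition i0 : 'I_3 := @Ordinal 3 0 isT.
Definition i1 : 'I_3 := @Ordinal 3 1 isT.
Definition i2 : 'I_3 := @Ordinal 3 2 isT.

Lemma ord3P (i : 'I_3) : [\/ i = i0, i = i1 | i = i2].
Proof.
case: i => [[|[|[|//]]] ?]; [constructor 1 | constructor 2 | constructor 3];
  exact: val_inj.
Qed.

Lemma sum3 (V : nmodType) (F : 'I_3 -> V) : \sum_(i < 3) F i = F i0 + F i1 + F i2.
Proof.
by rewrite !big_ord_recr big_ord0 /= add0r; congr (_ + _ + _); congr F; apply: val_inj.
Qed.

Section Vec3.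
Variable R : comNzRingType.
Implicit Types a b c n p q r u v w y : 'rV[R]_3.

Definition dot u v : R := u 0 i0 * v 0 i0 + u 0 i1 * v 0 i1 + u 0 i2 * v 0 i2.
Definition vcross u v : 'rV[R]_3 :=
  \row_k [:: u 0 i1 * v 0 i2 - u 0 i2 * v 0 i1;
             u 0 i2 * v 0 i0 - u 0 i0 * v 0 i2;
             u 0 i0 * v 0 i1 - u 0 i1 * v 0 i0]`_k.
Definition triple u v w : R := dot u (vcross v w).

Definition du_triple a1 a2 a3 b1 b2 b3 : R :=
  triple b1 a2 a3 + triple a1 b2 a3 + triple a1 a2 b3.

Lemma row3P u v : u 0 i0 = v 0 i0 -> u 0 i1 = v 0 i1 -> u 0 i2 = v 0 i2 -> u = v.
Proof. by move=> h0 h1 h2; apply/rowP => k; case: (ord3P k) => ->. Qed.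

End Vec3.

Ltac vec3 := rewrite /du_triple /triple /dot /vcross; try apply: row3P; rewrite ?mxE /=; ring.

Section Vec3Identities.
Variable R : comNzRingType.
Implicit Types a b c n p q r u v w y : 'rV[R]_3.

Lemma dotC u v : dot u v = dot v u. Proof. vec3. Qed.

Lemma vcrossC u v : vcross u v = - vcross v u. Proof. vec3. Qed.

Lemma cramer a b c y : triple a b c *: y =
  dot y a *: vcross b c + dot y b *: vcross c a + dot y c *: vcross a b.
Proof. vec3. Qed.

Lemma dot_vcross a b c : dot (vcross a b) c = triple a b c. Proof. vec3. Qed.

Lemma tripleZ (c1 c2 c3 : R) a b c :
  triple (c1 *: a) (c2 *: b) (c3 *: c) = c1 * c2 * c3 * triple a b c.
Proof. vec3. Qed.

Lemma sum_delta (r : 'I_3 -> R) : \sum_i r i *: delta_mx 0 i = \row_i r i.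
Proof. by apply/rowP => j; rewrite sum3 !mxE; case: (ord3P j) => -> /=; ring. Qed.

Lemma vcrossI p q :
  (forall i, vcross p (delta_mx 0 i) = vcross q (delta_mx 0 i)) -> p = q.
Proof.
move=> h; have /rowP h0 := h i0; have /rowP h1 := h i1.
move: (h0 i1) (h0 i2) (h1 i2); rewrite /vcross !mxE /= !(mulr0, mulr1, subr0, sub0r).
by move=> e2 /oppr_inj e1 e0; apply: row3P.
Qed.

End Vec3Identities.

Section Vec3Real.
Variable R : realFieldType.
Implicit Types a b c n p q r u v w y : 'rV[R]_3.

Lemma dot_eq0 a : (dot a a == 0) = (a == 0).
Proof.
apply/eqP/eqP => [|->]; last by vec3.
by rewrite /dot => h; apply/row3P; rewrite mxE; nra.
Qed.

Lemma dot_gt0 a : a != 0 -> 0 < dot a a.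
Proof.
rewrite -dot_eq0 lt_def => ->; rewrite /dot.
by have := sqr_ge0 (a 0 i0); have := sqr_ge0 (a 0 i1); have := sqr_ge0 (a 0 i2); nra.
Qed.

Lemma unit_neq0 a : dot a a = 1 -> a != 0.
Proof. by move=> h; rewrite -dot_eq0 h oner_neq0. Qed.

(* No linearity is assumed: skew-adjointness forces it. *)
Lemma skew_cross (f : 'rV[R]_3 -> 'rV[R]_3) :
  (forall a b, dot a (f b) + dot (f a) b = 0) -> exists p, forall a, f a = vcross p a.
Proof.
move=> skew; pose e i : 'rV[R]_3 := delta_mx 0 i.
have dot_e a j : dot a (e j) = a 0 j.
  by rewrite /e /dot !mxE; case: (ord3P j) => -> /=; ring.
have fE a j : f a 0 j = - dot a (f (e j)).
  by apply/eqP; rewrite -dot_e -addr_eq0 addrC skew.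
have F i j : f (e i) 0 j = - f (e j) 0 i by rewrite fE dotC dot_e.
have d i : f (e i) 0 i = 0 by have := F i i; lra.
exists (\row_k [:: f (e i1) 0 i2; f (e i2) 0 i0; f (e i0) 0 i1]`_k) => a.
apply: row3P; rewrite [f a 0 _]fE /dot /vcross !mxE /=;
  by rewrite ?(F i0 i2) ?(F i1 i0) ?(F i2 i1) ?d; ring.
Qed.

Lemma triple_normal_eq0 n a b c : n != 0 ->
  dot n a = 0 -> dot n b = 0 -> dot n c = 0 -> triple a b c = 0.
Proof.
move=> n0 ha hb hc; have /eqP := cramer a b c n.
by rewrite ha hb hc !scale0r !addr0 scaler_eq0 (negbTE n0) orbF => /eqP.
Qed.

Lemma eq0_of_dot_triple y a b c : triple a b c != 0 ->
  dot y a = 0 -> dot y b = 0 -> dot y c = 0 -> y = 0.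
Proof.
move=> abc0 ha hb hc; have /eqP := cramer a b c y.
by rewrite ha hb hc !scale0r !addr0 scaler_eq0 (negbTE abc0) => /eqP.
Qed.

Lemma vcross_eq0_unit a w : dot a a = 1 -> vcross w a = 0 -> w = dot w a *: a.
Proof.
move=> a1 wa0.
have e : dot a a *: w = dot w a *: a + vcross a (vcross w a) by vec3.
have a0 : vcross a 0 = 0 :> 'rV[R]_3 by vec3.
by move: e; rewrite a1 scale1r wa0 a0 addr0.
Qed.

Lemma triple_unit_normal a n : dot a a = 1 -> dot a n = 0 ->
  triple a n (vcross a n) = dot n n.
Proof.
move=> a1 an0; have -> : triple a n (vcross a n) = dot a a * dot n n - dot a n ^+ 2 by vec3.
by rewrite a1 an0 mul1r expr0n subr0.
Qed.

Lemma moment_eqP a b p : dot a a = 1 -> dot a b = 0 ->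
  vcross p a = b <-> exists t, p = vcross a b + t *: a.
Proof.
move=> a1 ab0; split => [pab | [t ->]].
  set w := p - vcross a b.
  have wa0 : vcross w a = 0.
    have -> : vcross w a = vcross p a - (dot a a *: b - dot a b *: a) by rewrite /w; vec3.
    by rewrite pab a1 ab0 scale1r scale0r subr0 subrr.
  by exists (dot w a); rewrite -(vcross_eq0_unit a1 wa0) /w addrC subrK.
have -> : vcross (vcross a b + t *: a) a = dot a a *: b - dot a b *: a by vec3.
by rewrite a1 ab0 scale1r scale0r subr0.
Qed.

Definition meets_normally q n a b : Prop :=
  dot a n = 0 /\ exists t, vcross (q + t *: n) a = b.

Lemma meets_normally_of_dot q n a b : dot a a = 1 -> n != 0 -> dot a n = 0 ->
  dot a b = 0 -> dot (vcross q a) n = dot b n -> meets_normally q n a b.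
Proof.
move=> a1 n0 an0 ab0 hq; split => //.
have nn0 : dot n n != 0 by rewrite dot_eq0.
set t := (dot (vcross q a) (vcross a n) - dot b (vcross a n)) / dot n n.
exists t; apply/eqP; rewrite -subr_eq0; apply/eqP.
have dotE X : dot (vcross (q + t *: n) a - b) X =
  dot (vcross q a) X + t * dot (vcross n a) X - dot b X by vec3.
apply: (@eq0_of_dot_triple _ a n (vcross a n)).
- by rewrite triple_unit_normal.
- have qa0 : dot (vcross q a) a = 0 by vec3.
  have na0 : dot (vcross n a) a = 0 by vec3.
  by rewrite dotE qa0 na0 dotC ab0 mulr0 !addr0 subrr.
- have nan0 : dot (vcross n a) n = 0 by vec3.
  by rewrite dotE hq nan0 mulr0 addr0 subrr.
- have nn : dot (vcross n a) (vcross a n) = - dot n n.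
    by rewrite -(triple_unit_normal a1 an0); vec3.
  by rewrite dotE nn /t; field.
Qed.

Lemma normal_decomp a n b : dot a a = 1 -> dot a n = 0 -> dot a b = 0 ->
  dot n n *: b = dot b n *: n + dot b (vcross a n) *: vcross a n.
Proof.
move=> a1 an0 ab0; have := cramer a n (vcross a n) b.
rewrite triple_unit_normal //.
have -> : vcross (vcross a n) a = n.
  have -> : vcross (vcross a n) a = dot a a *: n - dot a n *: a by vec3.
  by rewrite a1 an0 scale1r scale0r subr0.
by rewrite (dotC b a) ab0 scale0r add0r.
Qed.

Lemma du_triple_normal n a1 a2 a3 b1 b2 b3 : n != 0 ->
  dot a1 a1 = 1 -> dot a2 a2 = 1 -> dot a3 a3 = 1 ->
  dot a1 n = 0 -> dot a2 n = 0 -> dot a3 n = 0 ->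
  dot a1 b1 = 0 -> dot a2 b2 = 0 -> dot a3 b3 = 0 ->
  dot n n * du_triple a1 a2 a3 b1 b2 b3 =
  dot b1 n * triple n a2 a3 + dot b2 n * triple a1 n a3 + dot b3 n * triple a1 a2 n.
Proof.
move=> n0 u1 u2 u3 h1 h2 h3 o1 o2 o3.
have -> : dot n n * du_triple a1 a2 a3 b1 b2 b3 =
  du_triple a1 a2 a3 (dot n n *: b1) (dot n n *: b2) (dot n n *: b3) by vec3.
rewrite (normal_decomp u1 h1 o1) (normal_decomp u2 h2 o2) (normal_decomp u3 h3 o3).
have -> : forall x1 y1 x2 y2 x3 y3 : R,
    du_triple a1 a2 a3 (x1 *: n + y1 *: vcross a1 n) (x2 *: n + y2 *: vcross a2 n)
      (x3 *: n + y3 *: vcross a3 n) =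
    x1 * triple n a2 a3 + x2 * triple a1 n a3 + x3 * triple a1 a2 n +
    (y1 * triple (vcross a1 n) a2 a3 + y2 * triple a1 (vcross a2 n) a3 +
     y3 * triple a1 a2 (vcross a3 n)) by move=> *; vec3.
have nxa a : dot n (vcross a n) = 0 by vec3.
rewrite dotC in h1; rewrite dotC in h2; rewrite dotC in h3.
rewrite (triple_normal_eq0 n0 (nxa a1) h2 h3) (triple_normal_eq0 n0 h1 (nxa a2) h3).
by rewrite (triple_normal_eq0 n0 h1 h2 (nxa a3)) !mulr0 !addr0.
Qed.

Lemma normal_point_dot n r a : dot n n != 0 -> dot a n = 0 ->
  dot (vcross ((dot n n)^-1 *: vcross r n) a) n = dot a r.
Proof.
move=> nn0 an0; have -> : dot (vcross ((dot n n)^-1 *: vcross r n) a) n =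
  (dot n n)^-1 * (dot a r * dot n n - dot r n * dot a n) by vec3.
by rewrite an0 mulr0 subr0; field.
Qed.

Lemma common_normal_exists a1 a2 a3 b1 b2 b3 :
  dot a1 a1 = 1 -> dot a2 a2 = 1 -> dot a3 a3 = 1 ->
  dot a1 b1 = 0 -> dot a2 b2 = 0 -> dot a3 b3 = 0 ->
  triple a1 a2 a3 = 0 -> du_triple a1 a2 a3 b1 b2 b3 = 0 -> vcross a1 a2 != 0 ->
  exists q, [/\ meets_normally q (vcross a1 a2) a1 b1,
                meets_normally q (vcross a1 a2) a2 b2
              & meets_normally q (vcross a1 a2) a3 b3].
Proof.
move=> u1 u2 u3 o1 o2 o3 t0 dt0 n0; set n := vcross a1 a2 in n0 *.
have nn0 : dot n n != 0 by rewrite dot_eq0.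
have h1 : dot a1 n = 0 by rewrite /n; vec3.
have h2 : dot a2 n = 0 by rewrite /n; vec3.
have h3 : dot a3 n = 0 by rewrite -t0 /n; vec3.
pose s1 := dot b1 n; pose s2 := dot b2 n; pose s3 := dot b3 n.
(* [r] is the solution of [dot ai r = si]; the equation for [i = 3] is the
   consistency condition [du_triple = 0]. *)
pose r := (dot n n)^-1 *: (s1 *: vcross a2 n - s2 *: vcross a1 n).
have r1 : dot a1 r = s1.
  have -> : dot a1 r = (dot n n)^-1 * (s1 * dot n n) by rewrite /r /n; vec3.
  by field.
have r2 : dot a2 r = s2.
  have -> : dot a2 r = (dot n n)^-1 * (s2 * dot n n) by rewrite /r /n; vec3.
  by field.
have r3 : dot a3 r = s3.
  have := du_triple_normal n0 u1 u2 u3 h1 h2 h3 o1 o2 o3.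
  have -> : triple a1 a2 n = dot n n by rewrite /n; vec3.
  rewrite dt0 mulr0 -/s1 -/s2 -/s3 => /eqP; rewrite eq_sym addr_eq0 => /eqP e.
  have -> : dot a3 r =
    - (dot n n)^-1 * (s1 * triple n a2 a3 + s2 * triple a1 n a3) by rewrite /r; vec3.
  by rewrite e; field.
exists ((dot n n)^-1 *: vcross r n).
by split; apply: meets_normally_of_dot; rewrite ?normal_point_dot.
Qed.

Lemma meets_normally_triple q n a1 a2 a3 b1 b2 b3 : n != 0 ->
  meets_normally q n a1 b1 -> meets_normally q n a2 b2 -> meets_normally q n a3 b3 ->
  triple a1 a2 a3 = 0 /\ du_triple a1 a2 a3 b1 b2 b3 = 0.
Proof.
move=> n0 [h1 [t1 <-]] [h2 [t2 <-]] [h3 [t3 <-]].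
rewrite dotC in h1; rewrite dotC in h2; rewrite dotC in h3.
split; first exact: triple_normal_eq0 n0 h1 h2 h3.
(* the [q]-terms cancel: [du_triple a (vcross q a)] is the derivative of
   [triple] along an infinitesimal rotation *)
have -> : du_triple a1 a2 a3 (vcross (q + t1 *: n) a1) (vcross (q + t2 *: n) a2)
    (vcross (q + t3 *: n) a3) = t1 * triple (vcross n a1) a2 a3 +
    t2 * triple a1 (vcross n a2) a3 + t3 * triple a1 a2 (vcross n a3) by vec3.
have nxa a : dot n (vcross n a) = 0 by vec3.
rewrite (triple_normal_eq0 n0 (nxa a1) h2 h3) (triple_normal_eq0 n0 h1 (nxa a2) h3).
by rewrite (triple_normal_eq0 n0 h1 h2 (nxa a3)) !mulr0 !addr0.
Qed.

Lemma parallel_triple a1 a2 a3 b1 b2 b3 : dot a1 a1 = 1 ->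
  vcross a1 a2 = 0 -> vcross a1 a3 = 0 ->
  triple a1 a2 a3 = 0 /\ du_triple a1 a2 a3 b1 b2 b3 = 0.
Proof.
move=> u1 h12 h13.
have e2 : a2 = dot a2 a1 *: a1 by apply: vcross_eq0_unit; rewrite // vcrossC h12 oppr0.
have e3 : a3 = dot a3 a1 *: a1 by apply: vcross_eq0_unit; rewrite // vcrossC h13 oppr0.
by rewrite e2 e3; split; vec3.
Qed.

Theorem plucker_triple_eq0 a1 a2 a3 b1 b2 b3 :
  dot a1 a1 = 1 -> dot a2 a2 = 1 -> dot a3 a3 = 1 ->
  dot a1 b1 = 0 -> dot a2 b2 = 0 -> dot a3 b3 = 0 ->
  triple a1 a2 a3 = 0 /\ du_triple a1 a2 a3 b1 b2 b3 = 0 <->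
  (vcross a1 a2 = 0 /\ vcross a1 a3 = 0) \/
  exists q n, n != 0 /\ [/\ meets_normally q n a1 b1, meets_normally q n a2 b2
                           & meets_normally q n a3 b3].
Proof.
move=> u1 u2 u3 o1 o2 o3; split=> [[t0 dt0] | [[h12 h13] | [q [n [n0 [m1 m2 m3]]]]]].
- have [h12 | n0] := eqVneq (vcross a1 a2) 0; last first.
    have [q qn] := common_normal_exists u1 u2 u3 o1 o2 o3 t0 dt0 n0.
    by right; exists q, (vcross a1 a2); split.
  have [h13 | n0] := eqVneq (vcross a1 a3) 0; first by left.
  have t0' : triple a1 a3 a2 = 0.
    have -> : triple a1 a3 a2 = - triple a1 a2 a3 by vec3.
    by rewrite t0 oppr0.
  have dt0' : du_triple a1 a3 a2 b1 b3 b2 = 0.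
    have -> : du_triple a1 a3 a2 b1 b3 b2 = - du_triple a1 a2 a3 b1 b2 b3 by vec3.
    by rewrite dt0 oppr0.
  have [q [m1 m3 m2]] := common_normal_exists u1 u3 u2 o1 o3 o2 t0' dt0' n0.
  by right; exists q, (vcross a1 a3); split.
- exact: parallel_triple.
- exact: meets_normally_triple n0 m1 m2 m3.
Qed.

End Vec3Real.

(** * Dual numbers *)

Section DualVectors.
Variable R : comNzRingType.
Implicit Types (c d : dual R) (x y z : 'rV[dual R]_3).

Lemma dual_eq c d : dre c = dre d -> ddu c = ddu d -> c = d.
Proof. by case: c d => ? ? [? ?] /= -> ->. Qed.

Lemma dre1 : dre (1 : dual R) = 1. Proof. by []. Qed.
Lemma ddu1 : ddu (1 : dual R) = 0. Proof. by []. Qed.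

Lemma dreD c d : dre (c + d) = dre c + dre d. Proof. by []. Qed.
Lemma dduD c d : ddu (c + d) = ddu c + ddu d. Proof. by []. Qed.
Lemma dreN c : dre (- c) = - dre c. Proof. by []. Qed.
Lemma dduN c : ddu (- c) = - ddu c. Proof. by []. Qed.
Lemma dreM c d : dre (c * d) = dre c * dre d. Proof. by []. Qed.
Lemma dduM c d : ddu (c * d) = dre c * ddu d + ddu c * dre d. Proof. by []. Qed.

Definition re_vec x : 'rV[R]_3 := map_mx (@dre R) x.
Definition du_vec x : 'rV[R]_3 := map_mx (@ddu R) x.

Lemma dot_dual x y : dot x y = Dual (dot (re_vec x) (re_vec y))
  (dot (re_vec x) (du_vec y) + dot (du_vec x) (re_vec y)).
Proof.
by apply: dual_eq; rewrite /= /dot !mxE ?(dreD, dduD, dreM, dduM); ring.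
Qed.

Lemma triple_dual x y z : triple x y z =
  Dual (triple (re_vec x) (re_vec y) (re_vec z))
       (du_triple (re_vec x) (re_vec y) (re_vec z) (du_vec x) (du_vec y) (du_vec z)).
Proof.
apply: dual_eq; rewrite /= /du_triple /triple /dot /vcross !mxE /=;
  rewrite ?(dreD, dduD, dreN, dduN, dreM, dduM); ring.
Qed.

End DualVectors.

Section DualField.
Variable F : fieldType.
Implicit Types a b : F.

Lemma dual_mulV a b : a != 0 -> Dual a^-1 (- b / a ^+ 2) * Dual a b = 1.
Proof. by move=> a0; apply: dual_eq; rewrite ?(dreM, dduM) /=; field. Qed.

Lemma mul_dual_eq0 a b (c : dual F) : a != 0 -> Dual a b * c = 0 -> c = 0.
Proof. by move=> a0 e; rewrite -[c]mul1r -(dual_mulV b a0) -mulrA e mulr0. Qed.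

End DualField.

(** * Coordinates in an orthonormal basis *)

Section Coordinates.
Variable R : realType.
Local Notation M := (M R).
Local Notation piM := (@Defs.pi R).
Variables (sp : M -> M -> dual R) (m : 'I_3 -> M).
Hypothesis hsp : scalar_product sp.
Hypothesis hmb : is_basis m.
Hypothesis hmo : forall i j, sp (m i) (m j) = if i == j then 1 else 0.
Implicit Types (x y u : M) (a b p : 'rV[R]_3).

Definition coord x : 'rV[dual R]_3 := \row_i sp x (m i).
Definition re_coord x := re_vec (coord x).
Definition du_coord x := du_vec (coord x).
Definition dvec a b : 'rV[dual R]_3 := \row_i Dual (a 0 i) (b 0 i).
Definition of_coord (c : 'rV[dual R]_3) : M := \sum_i c 0 i *: m i.

Lemma spDl x y z : sp (x + y) z = sp x z + sp y z.
Proof. by case: hsp => _ lin _ _; have := lin 1 x y z; rewrite scale1r mul1r. Qed.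

Lemma sp0l z : sp 0 z = 0.
Proof. by apply: (@addrI _ (sp 0 z)); rewrite -spDl !addr0. Qed.

Lemma spZl c x z : sp (c *: x) z = c * sp x z.
Proof. by case: hsp => _ lin _ _; have := lin c x 0 z; rewrite !addr0 sp0l addr0. Qed.

Lemma spZr c x z : sp x (c *: z) = c * sp x z.
Proof. by case: hsp => sym _ _ _; rewrite sym spZl sym. Qed.

Lemma coordD x y : coord (x + y) = coord x + coord y.
Proof. by apply/rowP => i; rewrite !mxE spDl. Qed.

Lemma coordZ c x : coord (c *: x) = c *: coord x.
Proof. by apply/rowP => i; rewrite !mxE spZl. Qed.

Lemma sp_suml (F : 'I_3 -> M) z : sp (\sum_i F i) z = \sum_i sp (F i) z.
Proof. by rewrite !sum3 !spDl. Qed.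

Lemma coord_of_coord c : coord (of_coord c) = c.
Proof.
apply/rowP => j; rewrite mxE /of_coord sp_suml.
under eq_bigr do rewrite spZl hmo.
by rewrite sum3; case: (ord3P j) => -> /=; rewrite !(mulr0, mulr1, addr0, add0r).
Qed.

Lemma of_coordK x : of_coord (coord x) = x.
Proof.
have [c [-> _]] := hmb x.
have -> : \sum_(i < 3) c i *: m i = of_coord (\row_i c i).
  by apply: eq_bigr => i _; rewrite mxE.
by rewrite coord_of_coord.
Qed.

Lemma coord_inj : injective coord.
Proof. by move=> x y e; rewrite -(of_coordK x) e of_coordK. Qed.

Lemma coordP x y : re_coord x = re_coord y -> du_coord x = du_coord y -> x = y.
Proof.
move=> /rowP re /rowP du; apply/coord_inj/rowP => i.
by have := du i; have := re i; rewrite !mxE; apply: dual_eq.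
Qed.

Lemma re_coord_dvec a b : re_coord (of_coord (dvec a b)) = a.
Proof. by rewrite /re_coord coord_of_coord; apply/rowP => i; rewrite !mxE. Qed.

Lemma du_coord_dvec a b : du_coord (of_coord (dvec a b)) = b.
Proof. by rewrite /du_coord coord_of_coord; apply/rowP => i; rewrite !mxE. Qed.

Lemma re_coordD x y : re_coord (x + y) = re_coord x + re_coord y.
Proof. by rewrite /re_coord /re_vec coordD; apply/rowP => i; rewrite !mxE. Qed.

Lemma du_coordD x y : du_coord (x + y) = du_coord x + du_coord y.
Proof. by rewrite /du_coord /du_vec coordD; apply/rowP => i; rewrite !mxE. Qed.

Lemma re_coordZ c x : re_coord (c *: x) = dre c *: re_coord x.
Proof. by rewrite /re_coord /re_vec coordZ; apply/rowP => i; rewrite !mxE. Qed.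

Lemma du_coordZ c x :
  du_coord (c *: x) = dre c *: du_coord x + ddu c *: re_coord x.
Proof.
rewrite /re_coord /du_coord /du_vec /re_vec coordZ.
by apply/rowP => i; rewrite !mxE dduM addrC.
Qed.

Lemma re_coordB x y : re_coord (x - y) = re_coord x - re_coord y.
Proof. by rewrite re_coordD -scaleN1r re_coordZ /= scaleN1r. Qed.

Lemma re_coord0 : re_coord 0 = 0.
Proof. by rewrite /re_coord /re_vec; apply/rowP => i; rewrite !mxE sp0l. Qed.

Lemma du_coord0 : du_coord 0 = 0.
Proof. by rewrite /du_coord /du_vec; apply/rowP => i; rewrite !mxE sp0l. Qed.

Lemma re_coord_eps x y : re_coord (x + eps R *: y) = re_coord x.
Proof. by rewrite re_coordD re_coordZ /= scale0r addr0. Qed.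

Lemma du_coord_eps x y : du_coord (x + eps R *: y) = du_coord x + re_coord y.
Proof. by rewrite du_coordD du_coordZ /= scale0r add0r scale1r. Qed.

Lemma re_coord_sum (F : 'I_3 -> M) : re_coord (\sum_i F i) = \sum_i re_coord (F i).
Proof. by rewrite !sum3 !re_coordD. Qed.

Lemma du_coord_sum (F : 'I_3 -> M) : du_coord (\sum_i F i) = \sum_i du_coord (F i).
Proof. by rewrite !sum3 !du_coordD. Qed.

Lemma re_coord_m i : re_coord (m i) = delta_mx 0 i.
Proof.
rewrite /re_coord /re_vec; apply/rowP => j; rewrite !mxE hmo eqxx /= [j == i]eq_sym.
by case: (i == j).
Qed.

Lemma sp_coord x y : sp x y = dot (coord x) (coord y).
Proof.
case: hsp => sym _ _ _.
rewrite -{1}(of_coordK x) /of_coord sp_suml.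
under eq_bigr do rewrite spZl sym.
by rewrite sum3 /dot !mxE.
Qed.

Lemma ddu_sp x y :
  ddu (sp x y) = dot (re_coord x) (du_coord y) + dot (du_coord x) (re_coord y).
Proof. by rewrite sp_coord dot_dual. Qed.

Lemma epsM_re_coord x : epsM x <-> re_coord x = 0.
Proof.
split=> [[y ->] | re0].
  by rewrite re_coordZ /= scale0r.
exists (of_coord (dvec (du_coord x) 0)); apply: coordP.
  by rewrite re_coordZ /= scale0r.
by rewrite du_coordZ re_coord_dvec /= scale0r scale1r add0r.
Qed.

Lemma epsM_pi x : epsM x <-> piM x = 0.
Proof.
split=> [[y ->] | /matrixP pi0].
  by apply/matrixP => i j; rewrite !mxE /= mul0r.
exists (map_mx (fun c => Dual (ddu c) 0) x); apply/matrixP => i j.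
have := pi0 i j; rewrite !mxE => re0.
by apply: dual_eq; rewrite /= ?re0 ?dduM /= ?mul0r //; ring.
Qed.

Lemma pi_eq x y : piM x = piM y <-> re_coord x = re_coord y.
Proof.
have piB : piM (x - y) = piM x - piM y by apply/matrixP => i j; rewrite !mxE.
have reB := re_coordB x y.
split=> e.
  have /epsM_re_coord : epsM (x - y) by apply/epsM_pi; rewrite piB e subrr.
  by rewrite reB => /subr0_eq.
have /epsM_pi : epsM (x - y) by apply/epsM_re_coord; rewrite reB e subrr.
by rewrite piB => /subr0_eq.
Qed.

Definition vcoord (v : V R) : 'rV[R]_3 := re_coord (liftV v).
Definition vec_of (c : 'rV[R]_3) : V R := \sum_k c 0 k *: piM (m k).

Lemma liftVK v : piM (liftV v) = v.
Proof. by apply/matrixP => i j; rewrite !mxE. Qed.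

Lemma vcoord_pi x : vcoord (piM x) = re_coord x.
Proof. exact: (pi_eq (liftV (piM x)) x).1 (liftVK _). Qed.

Lemma vcoord_inj : injective vcoord.
Proof. by move=> v w /(pi_eq (liftV v) (liftV w)).2; rewrite !liftVK. Qed.

Lemma vcoordD v w : vcoord (v + w) = vcoord v + vcoord w.
Proof.
rewrite /vcoord -re_coordD; congr re_coord; apply/matrixP => i j; rewrite !mxE.
by apply: dual_eq; rewrite ?dreD ?dduD /= ?addr0.
Qed.

Lemma vcoordZ t v : vcoord (t *: v) = t *: vcoord v.
Proof.
rewrite /vcoord; have -> : liftV (t *: v) = rD t *: liftV v.
  apply/matrixP => i j; rewrite !mxE.
  by apply: dual_eq; rewrite ?dduM /= ?mulr0 ?mul0r ?addr0.
by rewrite re_coordZ.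
Qed.

Lemma vcoord_sum (F : 'I_3 -> V R) : vcoord (\sum_k F k) = \sum_k vcoord (F k).
Proof. by rewrite !sum3 !vcoordD. Qed.

Lemma vcoord_vec_of c : vcoord (vec_of c) = c.
Proof.
rewrite /vec_of vcoord_sum; under eq_bigr do rewrite vcoordZ vcoord_pi re_coord_m.
by rewrite sum_delta; apply/rowP => j; rewrite mxE.
Qed.

Lemma vec_of_vcoord v : vec_of (vcoord v) = v.
Proof. by apply: vcoord_inj; rewrite vcoord_vec_of. Qed.

Lemma vcoord_eq0 v : (vcoord v == 0) = (v == 0).
Proof.
have vcoord0 : vcoord 0 = 0 by have := vcoordZ 0 0; rewrite !scale0r.
by apply/eqP/eqP => [e|->//]; apply: vcoord_inj; rewrite e vcoord0.
Qed.

Lemma vdot_vcoord v w : vdot sp v w = dot (vcoord v) (vcoord w).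
Proof. by rewrite /vdot sp_coord dot_dual. Qed.

Lemma vcoord_comb (d : 'I_3 -> R) : vcoord (\sum_k d k *: piM (m k)) = \row_k d k.
Proof.
rewrite -[RHS]vcoord_vec_of /vec_of; congr vcoord.
by apply: eq_bigr => k _; rewrite mxE.
Qed.

Lemma re_coord_comb (r : 'I_3 -> R) (f : 'I_3 -> M) :
  re_coord (\sum_i rD (r i) *: f i) = \sum_i r i *: re_coord (f i).
Proof. by rewrite re_coord_sum; apply: eq_bigr => i _; rewrite re_coordZ. Qed.

Lemma du_coord_comb (r : 'I_3 -> R) (f : 'I_3 -> M) :
  du_coord (\sum_i rD (r i) *: f i) = \sum_i r i *: du_coord (f i).
Proof.
by rewrite du_coord_sum; apply: eq_bigr => i _; rewrite du_coordZ /= scale0r addr0.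
Qed.

Lemma re_coord_levi (d : 'I_3 -> R) (y : 'I_3 -> M) i :
  (forall j, re_coord (y j) = delta_mx 0 j) ->
  re_coord (\sum_j \sum_k (rD (d k) * levi R i j k) *: y j) =
  vcross (\row_k d k) (delta_mx 0 i).
Proof.
move=> hy; rewrite re_coord_sum.
under eq_bigr => j _ do rewrite re_coord_sum.
under eq_bigr => j _ do under eq_bigr => k _ do rewrite re_coordZ hy dreM.
rewrite !sum3; case: (ord3P i) => -> /=; rewrite ?dreN ?dre1 /=; vec3.
Qed.

Lemma rDB (s t : R) : rD (s - t) = rD s - rD t.
Proof. by apply: dual_eq; rewrite ?dreD ?dduD ?dreN ?dduN /= ?subr0. Qed.

(** * Points, lines and axes of E *)

Definition point p : M -> Prop := fun u => du_coord u = vcross p (re_coord u).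

(* The lift [e^P_i] of [e_i] to the point [P] with position [p]. *)
Definition basis_lift p i : M :=
  of_coord (dvec (delta_mx 0 i) (vcross p (delta_mx 0 i))).

Lemma re_basis_lift p i : re_coord (basis_lift p i) = delta_mx 0 i.
Proof. exact: re_coord_dvec. Qed.

Lemma du_basis_lift p i : du_coord (basis_lift p i) = vcross p (delta_mx 0 i).
Proof. exact: du_coord_dvec. Qed.

Lemma point_basis_lift p i : point p (basis_lift p i).
Proof. by rewrite /point re_basis_lift du_basis_lift. Qed.

Lemma point_inE p : Defs.inE sp (point p).
Proof.
have comb_re r : re_coord (\sum_i rD (r i) *: basis_lift p i) = \row_i r i.
  by rewrite re_coord_comb; under eq_bigr do rewrite re_basis_lift; exact: sum_delta.
have comb_du r : du_coord (\sum_i rD (r i) *: basis_lift p i) = vcross p (\row_i r i).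
  rewrite du_coord_comb; under eq_bigr do rewrite du_basis_lift.
  by rewrite -sum_delta !sum3; vec3.
split.
- exists (basis_lift p); split.
    move=> r /(congr1 re_coord); rewrite comb_re re_coord0 => /rowP h i.
    by have := h i; rewrite !mxE.
  move=> x; split=> [px | [r ->]]; last by rewrite /point comb_re comb_du.
  have rowx : \row_i re_coord x 0 i = re_coord x by apply/rowP => i; rewrite mxE.
  exists (fun i => re_coord x 0 i); apply: coordP; first by rewrite comb_re.
  by rewrite comb_du rowx.
- by move=> x y px py; rewrite ddu_sp px py; vec3.
- move=> x px /epsM_re_coord re0; apply: coordP; rewrite ?re_coord0 ?du_coord0 // px re0.
  by vec3.
Qed.

Section PointOfE.
Variable P : M -> Prop.
Hypothesis hP : Defs.inE sp P.

Lemma inE_lift_uniq x y : P x -> P y -> re_coord x = re_coord y -> x = y.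
Proof.
case: hP => [[f [_ f_span]] _ triv] px py e.
have P_sub : P (x - y).
  move: px py => /f_span [r ->] /f_span [s ->]; apply/f_span.
  exists (fun i => r i - s i); rewrite -sumrB.
  by apply: eq_bigr => i _; rewrite rDB scalerBl.
apply/subr0_eq/triv => //.
by apply/epsM_re_coord; rewrite re_coordB e subrr.
Qed.

Lemma inE_lift a : exists x, P x /\ re_coord x = a.
Proof.
case: hP => [[f [f_free f_span]] _ triv].
have P_comb r : P (\sum_i rD (r i) *: f i) by apply/f_span; exists r.
pose Q := \matrix_(i, j) re_coord (f i) 0 j.
have reQ r : re_coord (\sum_i rD (r i) *: f i) = \row_i r i *m Q.
  rewrite re_coord_comb; apply/rowP => j; rewrite !mxE summxE.
  by apply: eq_bigr => i _; rewrite !mxE.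
have rowK (w : 'rV[R]_3) : \row_i w 0 i = w by apply/rowP => i; rewrite mxE.
have Q_unit : Q \in unitmx.
  rewrite unitmxE unitfE; apply/negP => /det0P [w w0 wQ].
  have w_comb0 : \sum_i rD (w 0 i) *: f i = 0.
    by apply: triv; [exact: P_comb | apply/epsM_re_coord; rewrite reQ rowK].
  by move/negP: w0; apply; apply/eqP/rowP => i; rewrite (f_free _ w_comb0) mxE.
exists (\sum_i rD ((a *m invmx Q) 0 i) *: f i); split; first exact: P_comb.
by rewrite reQ rowK mulmxKV.
Qed.

(* [P] is the graph of a map from real to dual coordinates, which isotropy
   makes skew-adjoint. *)
Lemma inE_point : exists p, P = point p.
Proof.
case: (hP) => _ iso _; have [g hg] := choice inE_lift.
have skew a b : dot a (du_coord (g b)) + dot (du_coord (g a)) b = 0.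
  by have := iso _ _ (hg a).1 (hg b).1; rewrite ddu_sp (hg a).2 (hg b).2.
have [p hp] := skew_cross skew.
exists p; apply/funext => u; apply/propext; split => [pu | pu].
  rewrite /point -hp; congr du_coord; apply: inE_lift_uniq => //.
    exact: (hg _).1.
  by rewrite (hg _).2.
have <- : g (re_coord u) = u.
  by apply: coordP; [rewrite (hg _).2 | rewrite pu -hp].
exact: (hg _).1.
Qed.

End PointOfE.

Lemma point_inj : injective point.
Proof.
move=> p q epq; apply: vcrossI => i.
by have := point_basis_lift p i; rewrite epq /point re_basis_lift du_basis_lift.
Qed.

Lemma diffE_point p q v : diffE m (point p) (point q) v <-> vcoord v = q - p.
Proof.
have re_lift x i : piM x = piM (m i) -> re_coord x = delta_mx 0 i.
  by move/pi_eq; rewrite re_coord_m.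
split.
- case=> d [-> [eA [eB [lifts shift]]]]; rewrite vcoord_comb.
  apply/esym/eqP; rewrite subr_eq addrC; apply/eqP/vcrossI => i.
  have reA j : re_coord (eA j) = delta_mx 0 j by have [_ _ /re_lift + _] := lifts j.
  have [Ai Bi _ /re_lift reB] := lifts i.
  have := congr1 du_coord (shift i).
  rewrite du_coord_eps (re_coord_levi _ _ reA) Bi Ai reB reA => ->.
  by vec3.
- move=> vE; exists (fun k => vcoord v 0 k); split.
    by rewrite -{1}(vec_of_vcoord v).
  exists (basis_lift p), (basis_lift q); split.
    move=> i; split; try exact: point_basis_lift;
      by apply/pi_eq; rewrite re_basis_lift re_coord_m.
  move=> i; apply: coordP; first by rewrite [RHS]re_coord_eps !re_basis_lift.
  rewrite [RHS]du_coord_eps (re_coord_levi _ _ (re_basis_lift p)) !du_basis_lift.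
  have -> : \row_k vcoord v 0 k = q - p by rewrite -vE; apply/rowP => k; rewrite mxE.
  by vec3.
Qed.

Definition line_of p0 w : (M -> Prop) -> Prop :=
  fun B => exists t, B = point (p0 + t *: w).

Lemma mem_line_of p0 w p : line_of p0 w (point p) <-> exists t, p = p0 + t *: w.
Proof. by split=> [[t /point_inj] | [t ->]]; exists t. Qed.

Lemma line_dirE L v :
  line_dir sp m L v <-> vcoord v != 0 /\ exists p0, L = line_of p0 (vcoord v).
Proof.
have diffE_line p0 B : Defs.inE sp B /\ (exists t, diffE m (point p0) B (t *: v)) <->
    line_of p0 (vcoord v) B.
  split=> [[/inE_point [p ->] [t /diffE_point]] | [t ->]].
    by rewrite vcoordZ => e; exists t; rewrite e addrC subrK.
  split; first exact: point_inE.
  by exists t; apply/diffE_point; rewrite vcoordZ addrAC subrr add0r.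
rewrite vcoord_eq0; split=> [[v0 [A [/inE_point [p0 ->] [_ LE]]]] | [v0 [p0 ->]]].
  split=> //; exists p0; apply/funext => B; apply/propext; rewrite LE.
  exact: diffE_line.
split=> //; exists (point p0); split; first exact: point_inE.
split; first by exists 0; rewrite scale0r addr0.
by move=> B; rewrite diffE_line.
Qed.

Lemma is_lineE L : is_line sp m L <-> exists p0 w, w != 0 /\ L = line_of p0 w.
Proof.
split=> [[v /line_dirE [v0 [p0 ->]]] | [p0 [w [w0 ->]]]]; first by exists p0, (vcoord v).
by exists (vec_of w); apply/line_dirE; rewrite vcoord_vec_of; split=> //; exists p0.
Qed.

Lemma line_dir_line_of p0 w v : w != 0 ->
  line_dir sp m (line_of p0 w) v <-> exists c, c != 0 /\ vcoord v = c *: w.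
Proof.
move=> w0; rewrite line_dirE; split=> [[v0 [p1 e]] | [c [c0 vE]]].
  have [s0 es0] : exists s, p0 = p1 + s *: vcoord v.
    by apply/mem_line_of; rewrite -e; apply/mem_line_of; exists 0; rewrite scale0r addr0.
  have [s1 es1] : exists s, p0 + w = p1 + s *: vcoord v.
    by apply/mem_line_of; rewrite -e; apply/mem_line_of; exists 1; rewrite scale1r.
  have ew : w = (s1 - s0) *: vcoord v.
    move: es1; rewrite es0 -addrA => /addrI /(canRL (addKr _)) ->.
    by rewrite scalerBl addrC.
  have ds : s1 - s0 != 0 by apply: contra_neq w0 => e0; rewrite ew e0 scale0r.
  by exists (s1 - s0)^-1; rewrite invr_eq0 ew scalerA mulVf // scale1r.
split; first by rewrite vE scaler_eq0 negb_or c0.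
exists p0; apply/funext => B; apply/propext; rewrite vE.
split=> [[t ->] | [t ->]]; first by exists (t / c); rewrite scalerA mulfVK.
by exists (t * c); rewrite scalerA.
Qed.

Lemma parallel3_line_ofE p1 p2 p3 a1 a2 a3 :
  dot a1 a1 = 1 -> dot a2 a2 = 1 -> dot a3 a3 = 1 ->
  parallel3 sp m (line_of p1 a1) (line_of p2 a2) (line_of p3 a3) <->
  vcross a1 a2 = 0 /\ vcross a1 a3 = 0.
Proof.
move=> u1 u2 u3.
have [a1_0 a2_0 a3_0] := And3 (unit_neq0 u1) (unit_neq0 u2) (unit_neq0 u3).
rewrite /parallel3; split=> [[v [l1 l2 l3]] | [h12 h13]].
  have [c1 [c1_0 e1]] := (line_dir_line_of _ _ a1_0).1 l1.
  have par a c : dot a a = 1 -> c != 0 -> vcoord v = c *: a -> vcross a1 a = 0.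
    move=> ua c0 ea; have -> : a1 = (c1^-1 * c) *: a.
      by rewrite -scalerA -ea e1 scalerA mulVf // scale1r.
    by vec3.
  have [c2 [c2_0 e2]] := (line_dir_line_of _ _ a2_0).1 l2.
  have [c3 [c3_0 e3]] := (line_dir_line_of _ _ a3_0).1 l3.
  by split; [apply: (par _ c2) | apply: (par _ c3)].
have dir p a : dot a a = 1 -> vcross a1 a = 0 -> line_dir sp m (line_of p a) (vec_of a1).
  move=> ua h; have ea : a1 = dot a1 a *: a.
    by apply: vcross_eq0_unit; rewrite // vcrossC h oppr0.
  apply/line_dir_line_of; first exact: unit_neq0.
  exists (dot a1 a); rewrite vcoord_vec_of -ea; split=> //.
  by apply: contra_neq a1_0 => e0; rewrite ea e0 scale0r.
exists (vec_of a1); split; [apply: dir | apply: dir | apply: dir] => //; vec3.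
Qed.

Lemma meets_orthogonally_line_ofE a b q n : dot a a = 1 -> dot a b = 0 -> n != 0 ->
  meets_orthogonally sp m (line_of (vcross a b) a) (line_of q n) <-> meets_normally q n a b.
Proof.
move=> a1 ab0 n0; have a0 := unit_neq0 a1.
split=> [[[P [[s ->] /mem_line_of [t e]]] [v [w [lv lw vw]]]] | [an0 [t ht]]].
  have [c [c0 ev]] := (line_dir_line_of _ _ a0).1 lv.
  have [c' [c'0 ew]] := (line_dir_line_of _ _ n0).1 lw.
  split; last by exists t; rewrite -e; apply/moment_eqP => //; exists s.
  move: vw; rewrite vdot_vcoord ev ew.
  have -> : dot (c *: a) (c' *: n) = c * c' * dot a n by vec3.
  by move/eqP; rewrite !mulf_eq0 (negbTE c0) (negbTE c'0) => /eqP.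
split.
  exists (point (q + t *: n)); split; last by exists t.
  have [s es] := (moment_eqP _ a1 ab0).1 ht.
  by exists s; rewrite es.
exists (vec_of a), (vec_of n); rewrite vdot_vcoord !vcoord_vec_of; split=> //.
  by apply/line_dir_line_of => //; exists 1; rewrite oner_neq0 vcoord_vec_of scale1r.
by apply/line_dir_line_of => //; exists 1; rewrite oner_neq0 vcoord_vec_of scale1r.
Qed.

Lemma common_normal_line_ofE a1 a2 a3 b1 b2 b3 :
  dot a1 a1 = 1 -> dot a2 a2 = 1 -> dot a3 a3 = 1 ->
  dot a1 b1 = 0 -> dot a2 b2 = 0 -> dot a3 b3 = 0 ->
  (exists L, [/\ is_line sp m L,
                 meets_orthogonally sp m (line_of (vcross a1 b1) a1) L,
                 meets_orthogonally sp m (line_of (vcross a2 b2) a2) L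
               & meets_orthogonally sp m (line_of (vcross a3 b3) a3) L]) <->
  exists q n, n != 0 /\ [/\ meets_normally q n a1 b1, meets_normally q n a2 b2
                          & meets_normally q n a3 b3].
Proof.
move=> u1 u2 u3 o1 o2 o3.
split=> [[L [/is_lineE [q [n [n0 ->]]] m1 m2 m3]] | [q [n [n0 [m1 m2 m3]]]]].
  exists q, n; split=> //; split.
  - exact: (meets_orthogonally_line_ofE q u1 o1 n0).1 m1.
  - exact: (meets_orthogonally_line_ofE q u2 o2 n0).1 m2.
  - exact: (meets_orthogonally_line_ofE q u3 o3 n0).1 m3.
exists (line_of q n); split; first by apply/is_lineE; exists q, n.
- exact: (meets_orthogonally_line_ofE q u1 o1 n0).2 m1.
- exact: (meets_orthogonally_line_ofE q u2 o2 n0).2 m2.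
- exact: (meets_orthogonally_line_ofE q u3 o3 n0).2 m3.
Qed.

Lemma unit_coord u : sp u u = 1 ->
  dot (re_coord u) (re_coord u) = 1 /\ dot (re_coord u) (du_coord u) = 0.
Proof.
rewrite sp_coord dot_dual => u1; have := congr1 (@ddu R) u1; have := congr1 (@dre R) u1.
by rewrite /= ?dre1 ?ddu1 (dotC (du_vec _)) => -> h; split=> //; lra.
Qed.

Lemma unit_decomp z : ~ epsM z ->
  exists (a b : R) u, [/\ 0 < a, sp u u = 1 & z = Dual a b *: u].
Proof.
move=> zn0; have /dot_gt0 : re_coord z != 0 by apply/eqP => /epsM_re_coord.
set N := dot _ _ => N0; pose a := Num.sqrt N; pose b := dot (re_coord z) (du_coord z) / a.
have a0 : 0 < a by rewrite sqrtr_gt0.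
have a0' : a != 0 by rewrite gt_eqF.
have zz : sp z z = Dual a b * Dual a b.
  rewrite sp_coord dot_dual (dotC (du_vec _)); apply: dual_eq; rewrite ?dreM ?dduM /=.
    by rewrite -expr2 sqr_sqrtr ?ltW.
  by rewrite /b; field.
exists a, b, (Dual a^-1 (- b / a ^+ 2) *: z); split=> //.
  by rewrite spZl spZr zz (mulrA _ (Dual a b)) dual_mulV // mul1r dual_mulV.
by rewrite scalerA mulrC dual_mulV // scale1r.
Qed.

Lemma unit_decomp_uniq (a b : R) u (a' b' : R) u' : 0 < a -> 0 < a' ->
  sp u u = 1 -> sp u' u' = 1 -> Dual a b *: u = Dual a' b' *: u' -> u = u'.
Proof.
move=> a0 a'0 u1 u'1 e.
have ee : Dual a b * Dual a b = Dual a' b' * Dual a' b'.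
  by have := congr1 (fun x => sp x x) e; rewrite /= !spZl !spZr u1 u'1 !mulr1.
have ea : a = a' by move/(congr1 (@dre R)): ee; rewrite !dreM /=; nra.
have eb : b = b'.
  move/(congr1 (@ddu R)): ee; rewrite !dduM /= ea => h.
  have : a' * (b - b') = 0 by lra.
  by move/eqP; rewrite mulf_eq0 gt_eqF //= subr_eq0 => /eqP.
subst a' b'; have a0' : a != 0 by rewrite gt_eqF.
by rewrite -[u]scale1r -(dual_mulV b a0') -scalerA e scalerA dual_mulV // scale1r.
Qed.

Lemma axisE (a b : R) u : 0 < a -> sp u u = 1 ->
  axis sp (Dual a b *: u) = line_of (vcross (re_coord u) (du_coord u)) (re_coord u).
Proof.
move=> a0 u1; have [n1 o1] := unit_coord u1.
apply/funext => B; apply/propext; split.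
  case=> /inE_point [p ->] [a' [b' [u' [a'0 u'1 e pu']]]].
  have eu : u' = u := unit_decomp_uniq a'0 a0 u'1 u1 (esym e).
  have /(moment_eqP _ n1 o1) [t ->] : vcross p (re_coord u) = du_coord u.
    by rewrite -eu pu'.
  by exists t.
case=> t ->; split; first exact: point_inE.
exists a, b, u; split=> //; apply/esym/moment_eqP => //; by exists t.
Qed.

Lemma coord_cross x y : coord (Defs.cross sp m x y) = vcross (coord x) (coord y).
Proof.
apply/rowP => l; rewrite mxE /Defs.cross sp_suml.
under eq_bigr => i _ do rewrite sp_suml.
under eq_bigr => i _ do under eq_bigr => j _ do rewrite sp_suml.
under eq_bigr => i _ do under eq_bigr => j _ do under eq_bigr => k _ do rewrite spZl hmo.
by rewrite !sum3 /vcross /levi !mxE; case: (ord3P l) => -> /=; ring.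
Qed.

Lemma sp_cross x y z : sp (Defs.cross sp m x y) z = triple (coord x) (coord y) (coord z).
Proof. by rewrite sp_coord coord_cross dot_vcross. Qed.

Lemma sp_cross_scale_eq0 (a1 b1 : R) u1 (a2 b2 : R) u2 (a3 b3 : R) u3 :
  0 < a1 -> 0 < a2 -> 0 < a3 ->
  sp (Defs.cross sp m (Dual a1 b1 *: u1) (Dual a2 b2 *: u2)) (Dual a3 b3 *: u3) = 0 <->
  triple (re_coord u1) (re_coord u2) (re_coord u3) = 0 /\
  du_triple (re_coord u1) (re_coord u2) (re_coord u3)
            (du_coord u1) (du_coord u2) (du_coord u3) = 0.
Proof.
move=> /gt_eqF/negbT a1_0 /gt_eqF/negbT a2_0 /gt_eqF/negbT a3_0.
rewrite sp_cross !coordZ tripleZ triple_dual -!mulrA; split=> [|[-> ->]].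
  by move/(mul_dual_eq0 a1_0)/(mul_dual_eq0 a2_0)/(mul_dual_eq0 a3_0) => [-> ->].
by rewrite !mulr0.
Qed.

End Coordinates.

Theorem proposition14 (R : realType) (sp : M R -> M R -> dual R)
    (b0 m : 'I_3 -> M R) (z1 z2 z3 : M R) :
  scalar_product sp -> is_basis b0 -> pos_orthonormal sp b0 m ->
  ~ epsM z1 -> ~ epsM z2 -> ~ epsM z3 ->
  (sp (cross sp m z1 z2) z3 = 0 <->
     parallel3 sp m (axis sp z1) (axis sp z2) (axis sp z3)
     \/ exists L, [/\ is_line sp m L,
                      meets_orthogonally sp m (axis sp z1) L,
                      meets_orthogonally sp m (axis sp z2) L
                    & meets_orthogonally sp m (axis sp z3) L]).
Proof.
move=> hsp _ [hmb _ hmo] nz1 nz2 nz3.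
have [a1 [b1 [u1 [a1_0 u1_1 ->]]]] := unit_decomp hsp hmb hmo nz1.
have [a2 [b2 [u2 [a2_0 u2_1 ->]]]] := unit_decomp hsp hmb hmo nz2.
have [a3 [b3 [u3 [a3_0 u3_1 ->]]]] := unit_decomp hsp hmb hmo nz3.
have [n1 o1] := unit_coord hsp hmb hmo u1_1.
have [n2 o2] := unit_coord hsp hmb hmo u2_1.
have [n3 o3] := unit_coord hsp hmb hmo u3_1.
rewrite !(axisE hsp hmb hmo) //.
rewrite (propext (sp_cross_scale_eq0 hsp hmb hmo _ _ _ _ _ _ a1_0 a2_0 a3_0)).
rewrite (propext (parallel3_line_ofE hsp hmb hmo _ _ _ n1 n2 n3)).
rewrite (propext (common_normal_line_ofE hsp hmb hmo n1 n2 n3 o1 o2 o3)).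
exact: plucker_triple_eq0.
Qed.
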